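(* Let $\alpha_1,\dots,\alpha_n\in\Gamma$ be linearly independent over $\mathbb{R}$, and let $A$ and $\mathcal{V}$ be the matrices defined in the context. Fix $i\neq j$ and an integer $p\ge3$. Suppose that either $\operatorname{len}(\alpha_j-\alpha_i)\ge p$, or both of the following hold: (Q) for all $k\notin\{i,j\}$, $$\langle\alpha_j,\alpha_i\rangle\langle\alpha_j-\alpha_k,\alpha_k-\alpha_i\rangle=\langle\alpha_j,\alpha_k\rangle\langle\alpha_k,\alpha_i\rangle;$$ (V) for every ordered pair $(\beta,\gamma)$ of nonzero elements of $\Gamma$ with $\beta+\gamma=\alpha_j-\alpha_i$ that is not of the form $(\alpha_j-\alpha_k,\alpha_k-\alpha_i)$ or $(\alpha_k-\alpha_i,\alpha_j-\alpha_k)$ for some $k\notin\{i,j\}$, one has $\langle\beta,\gamma\rangle f^\beta f^\gamma\in(\mathbf{s})^p$. Then the $(j,i)$ entry of the covariant derivative $d\mathcal{V}+A\mathcal{V}-\mathcal{V}A$ lies in $(\mathbf{s})^p$.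
   Context: Let $\Gamma\cong\mathbb{Z}^n$ be a lattice with basis $[S_1],\dots,[S_n]$, and let $\langle-,-\rangle:\Gamma\times\Gamma\to\mathbb{Z}$ be a skew-symmetric bilinear form. For $\alpha=\sum_i a_i[S_i]$ set $\operatorname{len}(\alpha)=\sum_i|a_i|$. Let $U\subset\operatorname{Hom}(\Gamma,\mathbb{C})$ be a connected open set; for $\alpha\in\Gamma$, $Z(\alpha)$ is a linear holomorphic function on $U$. Let $\mathbf{s}=(s_1,\dots,s_n)$ be formal variables, and let $R$ be the ring of formal power series in $\mathbf{s}$ with coefficients holomorphic on $U$. Differential forms with coefficients in $R$ are power series in $\mathbf{s}$ whose coefficients are holomorphic forms, and $d$ acts coefficientwise. $(\mathbf{s})^p$ denotes the series (or forms) all of whose monomials have total degree at least $p$. Let $\{f^\alpha\}_{\alpha\in\Gamma\setminus\{0\}}\subset R$ satisfy: (i) $f^\alpha\in(\mathbf{s})^{\operatorname{len}(\alpha)}$; (ii) if $f^\alpha\neq0$ then $Z(\alpha)$ is nowhere zero on $U$; (iii) the Joyce PDE $$df^\alpha=-\sum_{\beta+\gamma=\alpha,\ \beta,\gamma\neq0}(-1)^{\langle\beta,\gamma\rangle}\langle\beta,\gamma\rangle f^\beta f^\gamma\, d\log Z(\beta)$$ holds, summing over ordered pairs. Define the $n\times n$ matrices $A$ (of $1$-forms) and $\mathcal{V}$ (with entries in $R$) by $A_{kk}=\mathcal{V}_{kk}=0$ and, for $k\neq l$, $$\mathcal{V}_{kl}=(-1)^{\langle\alpha_k,\alpha_l\rangle}\langle\alpha_k,\alpha_l\rangle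 f^{\alpha_k-\alpha_l},\qquad A_{kl}=\mathcal{V}_{kl}\,d\log Z(\alpha_k-\alpha_l),$$ with $A_{kl}=0$ when $f^{\alpha_k-\alpha_l}=0$. *)

From HB Require Import structures.
From mathcomp Require Import all_boot all_order all_algebra.
Set Implicit Arguments. Unset Strict Implicit. Unset Printing Implicit Defensive.
Import Order.TTheory GRing.Theory Num.Theory.
Local Open Scope ring_scope.

(* The lattice Gamma = Z^n, elements written in the basis [S_1..S_n]. *)
Definition lattice (n : nat) := {ffun 'I_n -> int}.

Definition len (n : nat) (a : lattice n) : nat := (\sum_(i < n) `|a i|)%N.

Definition pairing (n : nat) (B : 'I_n -> 'I_n -> int) (b c : lattice n) : int :=
  \sum_(i < n) \sum_(j < n) b i * c j * B i j.

Definition skew_form (n : nat) (B : 'I_n -> 'I_n -> int) : Prop :=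
  forall i j, B i j = - B j i.

Definition sgnpow (k : int) : int := (-1) ^+ `|k|%N.

(* Monomials s^m in the formal variables s_1..s_n (multi-indices). *)
Definition mono (n : nat) := {ffun 'I_n -> nat}.
Definition deg (n : nat) (m : mono n) : nat := (\sum_(i < n) m i)%N.

(* Formal power series in s with coefficients in H (resp. in the module
   Om of 1-forms): functions from multi-indices to coefficients. *)
Definition series (n : nat) (T : Type) := mono n -> T.

(* Cauchy product coefficient at m: sum over u <= m of a_u * b_(m-u).
   The index u ranges over ffuns with values < deg m + 1 (every u <= m does). *)
Definition psmul (H : comUnitRingType) (n : nat) (a b : series n H) : series n H :=
  fun m => \sum_(u : {ffun 'I_n -> 'I_(deg m).+1} | [forall i, (u i <= m i)%N])
             a [ffun i => nat_of_ord (u i)] * b [ffun i => (m i - u i)%N].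

Definition psmulf (H : comUnitRingType) (Om : lmodType H) (n : nat)
    (a : series n H) (w : series n Om) : series n Om :=
  fun m => \sum_(u : {ffun 'I_n -> 'I_(deg m).+1} | [forall i, (u i <= m i)%N])
             a [ffun i => nat_of_ord (u i)] *: w [ffun i => (m i - u i)%N].

(* membership in (s)^p : all monomials have total degree >= p *)
Definition inS (T : zmodType) (n : nat) (p : nat) (a : series n T) : Prop :=
  forall m : mono n, (deg m < p)%N -> a m = 0.

(* Z(alpha) = sum_i a_i Z(S_i), linear in alpha *)
Definition Zc (H : comUnitRingType) (n : nat) (z : 'I_n -> H) (a : lattice n) : H :=
  \sum_(i < n) z i *~ a i.

Definition dlogZ (H : comUnitRingType) (Om : lmodType H) (dH : H -> Om)
    (n : nat) (z : 'I_n -> H) (b : lattice n) : Om :=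
  (Zc z b)^-1 *: dH (Zc z b).

Definition boxpt (n N : nat) (v : {ffun 'I_n -> 'I_(N.*2.+1)}) : lattice n :=
  [ffun i => (nat_of_ord (v i))%:Z - N%:Z].

(* Right-hand side of the Joyce PDE, as a 1-form-valued series:
   - sum over ordered pairs (beta, gamma), beta, gamma nonzero, beta+gamma = alpha,
   of (-1)^<b,g> <b,g> f^b f^g dlog Z(b).
   The sum is infinite but s-adically convergent: by condition (i) only the
   pairs with len(beta) <= deg m can contribute to the coefficient of s^m,
   so the coefficient at m is computed as the (finite) sum over the box
   |beta_i| <= deg m. *)
Definition joyce_rhs (H : comUnitRingType) (Om : lmodType H) (dH : H -> Om)
    (n : nat) (B : 'I_n -> 'I_n -> int) (z : 'I_n -> H)
    (f : lattice n -> series n H) (a : lattice n) : series n Om :=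
  fun m => - \sum_(v : {ffun 'I_n -> 'I_((deg m).*2.+1)})
      let b := boxpt v in
      let g := a - b in
      if (b != 0) && (g != 0) then
        (psmul (f b) (f g) m *: dlogZ dH z b) *~
          (sgnpow (pairing B b g) * pairing B b g)
      else 0.

Definition Vmat (H : comUnitRingType) (n : nat) (B : 'I_n -> 'I_n -> int)
    (f : lattice n -> series n H) (al : 'I_n -> lattice n) (k l : 'I_n) : series n H :=
  fun m => if k == l then 0 else
    f (al k - al l) m *~ (sgnpow (pairing B (al k) (al l)) * pairing B (al k) (al l)).

Definition Amat (H : comUnitRingType) (Om : lmodType H) (dH : H -> Om)
    (n : nat) (B : 'I_n -> 'I_n -> int) (z : 'I_n -> H)
    (f : lattice n -> series n H) (al : 'I_n -> lattice n) (k l : 'I_n) : series n Om :=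
  fun m => if k == l then 0 else Vmat B f al k l m *: dlogZ dH z (al k - al l).

Definition covder (H : comUnitRingType) (Om : lmodType H) (dH : H -> Om)
    (n : nat) (B : 'I_n -> 'I_n -> int) (z : 'I_n -> H)
    (f : lattice n -> series n H) (al : 'I_n -> lattice n) (j i : 'I_n) : series n Om :=
  fun m => dH (Vmat B f al j i m)
    + \sum_(k < n) psmulf (Vmat B f al k i) (Amat dH B z f al j k) m
    - \sum_(k < n) psmulf (Vmat B f al j k) (Amat dH B z f al k i) m.

(* linear independence over Q (equivalently over R, for integer vectors) *)
Definition lin_indep (n : nat) (al : 'I_n -> lattice n) : Prop :=
  forall c : 'I_n -> rat,
    (forall l : 'I_n, \sum_(k < n) c k * ((al k l)%:~R : rat) = 0) ->
    forall k, c k = 0.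

From HB Require Import structures.
From mathcomp Require Import all_boot all_order all_algebra zify ring.
Import Order.TTheory GRing.Theory Num.Theory.
Set Implicit Arguments. Unset Strict Implicit. Unset Printing Implicit Defensive.
Local Open Scope ring_scope.

(* Write eps k l for the signed pairing (-1)^<a_k,a_l> <a_k,a_l>.  Since A is
   V with entries scaled by dlog Z, the (j,i) entry of AV - VA is the sum over
   k of eps j k * eps k i * f^(a_j - a_k) f^(a_k - a_i) times
   dlog Z(a_j - a_k) - dlog Z(a_k - a_i).  By the Joyce PDE, dV_(j,i) is a sum
   over splittings b + g = a_j - a_i; by (V) only the splittings
   (a_j - a_k, a_k - a_i) and their reverses survive modulo (s)^p (they are
   pairwise distinct by linear independence), and by (Q) their signed
   coefficients times eps j i are exactly - eps j k * eps k i, so everything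
   cancels.  If len (a_j - a_i) >= p, each term already lies in (s)^p because
   len is subadditive and f^b lies in (s)^(len b). *)

Lemma sgnpowD a b : sgnpow (a + b) = sgnpow a * sgnpow b.
Proof.
have E k : sgnpow k = (-1) ^ k by case: k.
by rewrite !E exprzDr // unitrN1.
Qed.

Lemma sgnpowN a : sgnpow (- a) = sgnpow a.
Proof. by rewrite /sgnpow abszN. Qed.

Section SkewForm.
Variables (n : nat) (B : 'I_n -> 'I_n -> int).
Hypothesis hB : skew_form B.
Local Notation "<< x , y >>" := (pairing B x y).

Lemma pairingBl x y w : << x - y, w >> = << x, w >> - << y, w >>.
Proof.
rewrite /pairing -sumrB; apply: eq_bigr => k _.
by rewrite -sumrB; apply: eq_bigr => l _; rewrite !ffunE; ring.
Qed.

Lemma pairingBr x y w : << w, x - y >> = << w, x >> - << w, y >>.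
Proof.
rewrite /pairing -sumrB; apply: eq_bigr => k _.
by rewrite -sumrB; apply: eq_bigr => l _; rewrite !ffunE; ring.
Qed.

Lemma pairing_skew x y : << y, x >> = - << x, y >>.
Proof.
rewrite /pairing exchange_big -sumrN; apply: eq_bigr => k _.
by rewrite -sumrN; apply: eq_bigr => l _; rewrite hB; ring.
Qed.

Lemma pairingxx x : << x, x >> = 0.
Proof. by have := pairing_skew x x; lia. Qed.

Definition signed_pairing x y : int := sgnpow << x, y >> * << x, y >>.

Lemma signed_pairing_skew x y : signed_pairing y x = - signed_pairing x y.
Proof. by rewrite /signed_pairing pairing_skew sgnpowN mulrN. Qed.

Lemma signed_pairingxx x : signed_pairing x x = 0.
Proof. by rewrite /signed_pairing pairingxx mulr0. Qed.

Lemma signed_pairing_triangle x y w :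
  << x, y >> * << x - w, w - y >> = << x, w >> * << w, y >> ->
  signed_pairing (x - w) (w - y) * signed_pairing x y =
  signed_pairing x w * signed_pairing w y.
Proof.
move=> hQ; rewrite /signed_pairing mulrACA -sgnpowD.
have -> : << x - w, w - y >> + << x, y >> = << x, w >> + << w, y >>.
  by rewrite pairingBl !pairingBr pairingxx; ring.
by rewrite sgnpowD [_ * << x, y >>]mulrC hQ mulrACA.
Qed.

End SkewForm.

Lemma len_subr_triangle n (x y w : lattice n) :
  (len (x - y)%R <= len (x - w)%R + len (w - y)%R)%N.
Proof.
rewrite /len -big_split /=; apply: leq_sum => k _; rewrite !ffunE.
exact: leqD_dist.
Qed.

Lemma len0 n : len (0 : lattice n) = 0%N.
Proof. by rewrite /len big1 // => k _; rewrite ffunE. Qed.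

Lemma len_coord n (x : lattice n) k : (`|x k| <= len x)%N.
Proof. by rewrite /len (bigD1 k) //= leq_addr. Qed.

Lemma deg_coord n (m : mono n) k : (m k <= deg m)%N.
Proof. by rewrite /deg (bigD1 k) //= leq_addr. Qed.

Section PowerSeries.
Variables (H : comUnitRingType) (n : nat).

Lemma psmul_inS (a b : series n H) p q :
  inS p a -> inS q b -> inS (p + q) (psmul a b).
Proof.
move=> ha hb m hm; rewrite /psmul big1 // => u /forallP hu.
set U : mono n := [ffun k => nat_of_ord (u k)].
set W : mono n := [ffun k => (m k - u k)%N].
have hUW : (deg U + deg W)%N = deg m.
  rewrite /deg -big_split; apply: eq_bigr => k _.
  by rewrite !ffunE; apply: subnKC.
have [hU|hU] := ltnP (deg U) p; first by rewrite ha ?mul0r.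
by rewrite hb ?mulr0 //; lia.
Qed.

Definition compl_index (m : mono n) (u : {ffun 'I_n -> 'I_(deg m).+1}) :
  {ffun 'I_n -> 'I_(deg m).+1} :=
  [ffun k => if (u k <= m k)%N then inord (m k - u k) else u k].

Lemma compl_indexE (m : mono n) (u : {ffun 'I_n -> 'I_(deg m).+1}) k :
  (u k <= m k)%N -> nat_of_ord (compl_index u k) = (m k - u k)%N.
Proof.
by move=> h; rewrite ffunE h inordK //; have := deg_coord m k; lia.
Qed.

Lemma compl_index_le (m : mono n) (u : {ffun 'I_n -> 'I_(deg m).+1}) k :
  (compl_index u k <= m k)%N = (u k <= m k)%N.
Proof.
case h: (u k <= m k)%N; first by rewrite compl_indexE // leq_subr.
by rewrite ffunE h h.
Qed.

Lemma compl_indexK (m : mono n) : involutive (@compl_index m).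
Proof.
move=> u; apply/ffunP => k; case h: (u k <= m k)%N.
  by apply: val_inj; rewrite /= !compl_indexE ?compl_index_le //; lia.
by rewrite ffunE compl_index_le h ffunE h.
Qed.

Lemma psmulC (a b : series n H) (m : mono n) : psmul a b m = psmul b a m.
Proof.
rewrite /psmul (reindex_inj (inv_inj (@compl_indexK m))) /=.
apply: eq_big => [u|u /forallP hu].
  by apply: eq_forallb => k; rewrite compl_index_le.
have {}hu k : (u k <= m k)%N by rewrite -compl_index_le hu.
rewrite mulrC; congr (b _ * a _); apply/ffunP => k;
  rewrite [LHS]ffunE [RHS]ffunE compl_indexE //.
by have := hu k; lia.
Qed.

End PowerSeries.

Lemma sumr_delta (R : pzRingType) n (a : 'I_n) (F : 'I_n -> R) :
  \sum_(k < n) (k == a)%:R * F k = F a.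
Proof.
rewrite (bigD1 a) //= eqxx mul1r big1 ?addr0 // => k /negbTE ->.
by rewrite mul0r.
Qed.

Lemma lin_indep_sum2 n (al : 'I_n -> lattice n) a b c d : lin_indep al ->
  al a + al b = al c + al d -> (a == c) || (a == d).
Proof.
move=> hind E; apply: contraT => /norP[ac ad].
pose cf k : rat := (k == a)%:R + (k == b)%:R - (k == c)%:R - (k == d)%:R.
suff /(_ a) : forall k, cf k = 0.
  by rewrite /cf eqxx (negbTE ac) (negbTE ad) !subr0; case: (a == b).
apply: hind => l.
have El : al a l + al b l = al c l + al d l.
  by have := congr1 (fun x : lattice n => x l) E; rewrite !ffunE.
under eq_bigr => k _ do rewrite !mulrDl !mulNr.
rewrite !big_split /= !sumrN !sumr_delta -!rmorphD /= -!rmorphN -!rmorphD /= El.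
by rewrite [al c l + _]addrC addrK subrr.
Qed.

Lemma lin_indep_inj n (al : 'I_n -> lattice n) : lin_indep al -> injective al.
Proof.
move=> hind k k' E; apply/eqP.
have := lin_indep_sum2 (a := k) (b := k) (c := k') (d := k') hind.
by rewrite E orbb; apply.
Qed.

Lemma boxpt_inj n N : injective (@boxpt n N).
Proof.
move=> v w E; apply/ffunP => l; apply: val_inj.
have := congr1 (fun x : lattice n => x l) E; rewrite !ffunE.
by move=> /addIr [].
Qed.

Lemma sum_box_indicator (V : zmodType) n N (b : lattice n) (x : V) :
  (len b <= N)%N \/ x = 0 ->
  \sum_(v : {ffun 'I_n -> 'I_(N.*2.+1)}) (if boxpt v == b then x else 0) = x.
Proof.
case=> [hb|->]; last by rewrite big1 // => v _; case: ifP.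
pose v0 : {ffun 'I_n -> 'I_(N.*2.+1)} := [ffun l => inord `|(b l + N%:Z)%R|%N].
have hv0 : boxpt v0 = b.
  apply/ffunP => l; rewrite !ffunE.
  have := leq_trans (len_coord b l) hb; move: (b l) => y hy; rewrite inordK; lia.
rewrite (bigD1 v0) //= hv0 eqxx big1 ?addr0 // => v hv.
by case: eqP => // E; move: hv; rewrite -hv0 in E; rewrite (boxpt_inj E) eqxx.
Qed.

Lemma sum_box_support (V : zmodType) n N (I : finType) (P : pred I)
    (e : I -> lattice n) (F : lattice n -> V) :
  {in P &, injective e} ->
  (forall b, (forall x, P x -> b != e x) -> F b = 0) ->
  (forall x, P x -> (len (e x) <= N)%N \/ F (e x) = 0) ->
  \sum_(v : {ffun 'I_n -> 'I_(N.*2.+1)}) F (boxpt v) = \sum_(x | P x) F (e x).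
Proof.
move=> e_inj F_out F_box.
have F_split b : F b = \sum_(x | P x) (if b == e x then F (e x) else 0).
  have [x0 /andP[Px0 /eqP->]|none] := pickP [pred x | P x && (b == e x)].
    rewrite (bigD1 x0) //= eqxx big1 ?addr0 // => x /andP[Px x_x0].
    by case: eqP => // /(e_inj _ _ Px0 Px) E; rewrite E eqxx in x_x0.
  have nb x : P x -> (b == e x) = false by move=> Px; have /= := none x; rewrite Px.
  by rewrite F_out => [|x Px]; rewrite ?nb // big1 // => x Px; rewrite nb.
rewrite (eq_bigr _ (fun v _ => F_split (boxpt v))) exchange_big /=.
by apply: eq_bigr => x Px; apply: sum_box_indicator; apply: F_box.
Qed.

Section JoyceTerm.
Variables (n : nat) (H : comUnitRingType) (Om : lmodType H) (dH : H -> Om).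
Variables (B : 'I_n -> 'I_n -> int) (z : 'I_n -> H) (f : lattice n -> series n H).
Hypothesis hB : skew_form B.
Hypothesis hf_len : forall a, a != 0 -> inS (len a) (f a).

Lemma f_inS_len a : inS (len a) (f a).
Proof. by have [-> m|/hf_len//] := eqVneq a 0; rewrite len0. Qed.

Lemma psmul_f_eq0 b c (m : mono n) :
  (deg m < len b + len c)%N -> psmul (f b) (f c) m = 0.
Proof. exact: psmul_inS (f_inS_len (a := b)) (f_inS_len (a := c)) m. Qed.

Definition joyce_term (a b : lattice n) (m : mono n) : Om :=
  (psmul (f b) (f (a - b)) m *: dlogZ dH z b) *~ signed_pairing B b (a - b).

Lemma joyce_rhsE a m : joyce_rhs dH B z f a m =
  - \sum_(v : {ffun 'I_n -> 'I_((deg m).*2.+1)})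
      (if (boxpt v != 0) && (a - boxpt v != 0) then joyce_term a (boxpt v) m
       else 0).
Proof. by []. Qed.

Lemma joyce_term_eq0 a b m : (deg m < len b)%N -> joyce_term a b m = 0.
Proof.
move=> hb; rewrite /joyce_term psmul_f_eq0 ?scale0r ?mul0rz //.
exact: leq_trans hb (leq_addr _ _).
Qed.

Lemma joyce_term_pair b c m :
  joyce_term (b + c) b m + joyce_term (b + c) c m =
  (psmul (f b) (f c) m *: (dlogZ dH z b - dlogZ dH z c)) *~ signed_pairing B b c.
Proof.
rewrite /joyce_term addrK [b + c]addrC addrK psmulC (signed_pairing_skew hB c).
by rewrite !mulrNz scalerBr mulrzBl opprB addrC.
Qed.

End JoyceTerm.

Section CovariantDerivative.
Variables (n : nat) (H : comUnitRingType) (Om : lmodType H) (dH : H -> Om).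
Hypothesis dH_add : forall a b : H, dH (a + b) = dH a + dH b.
Variables (B : 'I_n -> 'I_n -> int) (z : 'I_n -> H) (f : lattice n -> series n H).
Hypothesis hB : skew_form B.
Hypothesis hf_len : forall a, a != 0 -> inS (len a) (f a).
Variables (al : 'I_n -> lattice n) (i j : 'I_n) (p : nat).

Let dH_sub : {morph dH : x y / x - y}.
Proof. by move=> x y; apply/eqP; rewrite eq_sym subr_eq -dH_add subrK. Qed.

HB.instance Definition _ := GRing.isZmodMorphism.Build H Om dH dH_sub.

Lemma VmatE k l u :
  Vmat B f al k l u = f (al k - al l) u *~ signed_pairing B (al k) (al l).
Proof. by rewrite /Vmat; case: eqP => [->|//]; rewrite signed_pairingxx. Qed.

Lemma AmatE k l u :
  Amat dH B z f al k l u = Vmat B f al k l u *: dlogZ dH z (al k - al l).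
Proof. by rewrite /Amat /Vmat; case: eqP => // _; rewrite scale0r. Qed.

Lemma psmulf_VmatAmat k l r s m :
  psmulf (Vmat B f al k l) (Amat dH B z f al r s) m =
  (psmul (f (al k - al l)) (f (al r - al s)) m *~
     (signed_pairing B (al k) (al l) * signed_pairing B (al r) (al s)))
  *: dlogZ dH z (al r - al s).
Proof.
rewrite /psmulf /psmul mulrz_suml scaler_suml; apply: eq_bigr => u _.
rewrite AmatE !VmatE scalerA mulrzAl mulrzAr -mulrzA.
by rewrite [signed_pairing _ (al r) _ * _]mulrC.
Qed.

Lemma covderE m : covder dH B z f al j i m =
  dH (f (al j - al i) m) *~ signed_pairing B (al j) (al i) +
  \sum_(k < n) (psmul (f (al j - al k)) (f (al k - al i)) m *~
       (signed_pairing B (al j) (al k) * signed_pairing B (al k) (al i)))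
     *: (dlogZ dH z (al j - al k) - dlogZ dH z (al k - al i)).
Proof.
rewrite /covder VmatE raddfMz -addrA -sumrB; congr (_ + _).
apply: eq_bigr => k _; rewrite !psmulf_VmatAmat psmulC.
by rewrite [signed_pairing _ _ _ * _]mulrC scalerBr.
Qed.

Lemma covder_inS_len :
  (p <= len (al j - al i)%R)%N -> inS p (covder dH B z f al j i).
Proof.
move=> hl m hm; rewrite covderE (f_inS_len hf_len) ?(leq_trans hm hl) //.
rewrite raddf0 mul0rz add0r big1 // => k _.
rewrite psmul_f_eq0 ?mul0rz ?scale0r //.
exact: leq_trans hm (leq_trans hl (len_subr_triangle _ _ _)).
Qed.

Hypothesis hind : lin_indep al.
Hypothesis hij : i != j.

(* The first components (true) and second components (false) of the splittings
   (a_j - a_k, a_k - a_i) of a_j - a_i singled out in (V). *)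
Definition special_beta (x : 'I_n * bool) : lattice n :=
  if x.2 then al j - al x.1 else al x.1 - al i.

Local Notation special := [pred x : 'I_n * bool | (x.1 != i) && (x.1 != j)].

Lemma special_beta_inj : {in special &, injective special_beta}.
Proof.
have al_inj := lin_indep_inj hind.
have cross k k' : k != j -> k' != j -> al j - al k != al k' - al i.
  move=> kj k'j; apply/eqP => E.
  have : al j + al i = al k' + al k.
    by rewrite -(subrK (al k) (al j)) E addrAC subrK.
  by move/(lin_indep_sum2 hind); rewrite ![j == _]eq_sym (negbTE kj) (negbTE k'j).
move=> [k [|]] [k' [|]] /andP[/= ki kj] /andP[/= k'i k'j];
  rewrite /special_beta /= => E.
- by rewrite (al_inj k k' (oppr_inj (addrI _ E))).
- by have := cross k k' kj k'j; rewrite E eqxx.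
- by have := cross k' k k'j kj; rewrite E eqxx.
- by rewrite (al_inj k k' (addIr _ E)).
Qed.

Lemma special_beta_compl x :
  al j - al i - special_beta x = special_beta (x.1, ~~ x.2).
Proof.
case: x => k [|]; rewrite /special_beta /=.
  by rewrite opprB addrC addrA subrK.
by rewrite opprB addrA subrK.
Qed.

Lemma special_beta_neq0 x : special x -> special_beta x != 0.
Proof.
have al_inj := lin_indep_inj hind.
case: x => k [|] /andP[/= ki kj]; rewrite /special_beta /= subr_eq0.
  by rewrite (inj_eq al_inj) eq_sym.
by rewrite (inj_eq al_inj).
Qed.

Hypothesis hV : forall b g : lattice n, b != 0 -> g != 0 -> b + g = al j - al i ->
  ~ (exists k : 'I_n, k != i /\ k != j /\
       ((b = al j - al k /\ g = al k - al i) \/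
        (b = al k - al i /\ g = al j - al k))) ->
  inS p (fun m => psmul (f b) (f g) m *~ pairing B b g).

Lemma joyce_rhs_special m : (deg m < p)%N ->
  joyce_rhs dH B z f (al j - al i) m =
  - \sum_(k | (k != i) && (k != j))
      (joyce_term dH B z f (al j - al i) (al j - al k) m +
       joyce_term dH B z f (al j - al i) (al k - al i) m).
Proof.
move=> hm; rewrite joyce_rhsE; congr (- _).
pose F b := if (b != 0) && (al j - al i - b != 0)
            then joyce_term dH B z f (al j - al i) b m else 0.
have F_special x : special x ->
    F (special_beta x) = joyce_term dH B z f (al j - al i) (special_beta x) m.
  case: x => k s sx; rewrite /F special_beta_compl special_beta_neq0 //.
  by rewrite special_beta_neq0.
rewrite (sum_box_support (F := F) special_beta_inj); first last.
- move=> x _; have [|h] := leqP (len (special_beta x)) (deg m); first by left.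
  by right; rewrite /F joyce_term_eq0 ?if_same.
- move=> b b_gen; rewrite /F; case: ifP => // /andP[b0 ab0].
  rewrite /joyce_term /signed_pairing mulrC mulrzA scalerMzl.
  rewrite (hV b0 ab0 (subrKC _ _) _ hm) ?scale0r ?mul0rz //.
  move=> [k [ki [kj [[E _]|[E _]]]]].
  + by have := b_gen (k, true); rewrite /special_beta /= ki kj E eqxx => /(_ isT).
  + by have := b_gen (k, false); rewrite /special_beta /= ki kj E eqxx => /(_ isT).
rewrite (eq_bigr (fun k => \sum_s F (special_beta (k, s)))) => [|k sk].
  by rewrite pair_big_dep; apply: eq_bigl => -[k s]; rewrite /= andbT.
by rewrite big_bool !F_special.
Qed.

Hypothesis hf_joyce : forall a, a != 0 ->
  forall m, dH (f a m) = joyce_rhs dH B z f a m.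
Hypothesis hQ : forall k, k != i -> k != j ->
  pairing B (al j) (al i) * pairing B (al j - al k) (al k - al i) =
  pairing B (al j) (al k) * pairing B (al k) (al i).

Lemma covder_inS_special : inS p (covder dH B z f al j i).
Proof.
move=> m hm; have a0 : al j - al i != 0.
  by rewrite subr_eq0 (inj_eq (lin_indep_inj hind)) eq_sym.
rewrite covderE hf_joyce // joyce_rhs_special // mulNrz mulrz_suml.
apply/eqP; rewrite addrC subr_eq0; apply/eqP; rewrite [RHS]big_mkcond.
apply: eq_bigr => k _; case: ifP => [/andP[ki kj]|/negbT/nandP[]/negPn/eqP->].
- have -> : al j - al i = (al j - al k) + (al k - al i) by rewrite addrA subrK.
  by rewrite joyce_term_pair // -mulrzA signed_pairing_triangle ?hQ // scalerMzl.
- by rewrite signed_pairingxx // mulr0 mulr0z scale0r.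
- by rewrite signed_pairingxx // mul0r mulr0z scale0r.
Qed.

End CovariantDerivative.

Theorem lemma3p9
  (n : nat)
  (H : comUnitRingType) (Om : lmodType H) (dH : H -> Om)
  (dH_add : forall a b : H, dH (a + b) = dH a + dH b)
  (dH_mul : forall a b : H, dH (a * b) = a *: dH b + b *: dH a)
  (B : 'I_n -> 'I_n -> int) (hB : skew_form B)
  (z : 'I_n -> H)
  (f : lattice n -> series n H)
  (hf_i : forall a : lattice n, a != 0 -> inS (len a) (f a))
  (hf_ii : forall a : lattice n, a != 0 -> (exists m, f a m != 0) ->
             Zc z a \is a GRing.unit)
  (hf_iii : forall a : lattice n, a != 0 ->
             forall m, dH (f a m) = joyce_rhs dH B z f a m)
  (al : 'I_n -> lattice n) (hind : lin_indep al)
  (i j : 'I_n) (hij : i != j) (p : nat) (hp : (3 <= p)%N)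
  (hyp : (p <= len (al j - al i)%R)%N \/
         ((forall k : 'I_n, k != i -> k != j ->
             pairing B (al j) (al i) * pairing B (al j - al k) (al k - al i)
             = pairing B (al j) (al k) * pairing B (al k) (al i)) /\
          (forall b g : lattice n, b != 0 -> g != 0 -> b + g = al j - al i ->
             ~ (exists k : 'I_n, k != i /\ k != j /\
                  ((b = al j - al k /\ g = al k - al i) \/
                   (b = al k - al i /\ g = al j - al k))) ->
             inS p (fun m => psmul (f b) (f g) m *~ pairing B b g)))) :
  inS p (covder dH B z f al j i).
Proof.
case: hyp => [hlen|[hQ hV]]; first exact: covder_inS_len.
exact: covder_inS_special.
Qed.
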